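(* Let $b\ge2$ and $k\in\mathbb{N}$, and let $f\in\mathcal{M}^b$ be a multiset whose maximal element is at most $k$ and which is not the constant $0$ function. Then $d(f)\le d([k]_b)$, and the inequality is strict if $f\neq[k]_b$. Equivalently, in any base $b\ge3$, among all $k$-digit numbers $n$ (in base $b$), the number $d_b(n)$ of lunar divisors has a unique maximum at $n=(b^k-1)/(b-1)$, whose base-$b$ expansion is $11\ldots1$.
   Context: $\mathbb{N}=\{0,1,2,\ldots\}$, $[k]=\{0,1,\ldots,k\}$. For $b\ge1$, $\mathcal{M}^b$ is the set of finite multisets of natural numbers with multiplicities at most $b$, i.e. functions $f:\mathbb{N}\to\{0,1,\ldots,b\}$ with $f(j)=0$ for all large $j$. The set-array representation of $f$ is $(A_1,\ldots,A_b)$ where $A_i=\{a\in\mathbb{N}: f(a)\ge i\}$ (so $A_1\supseteq A_2\supseteq\cdots\supseteq A_b$). The sum of multisets is defined coordinatewise on set arrays: $(A_1,\ldots,A_b)+(B_1,\ldots,B_b)=(A_1+B_1,\ldots,A_b+B_b)$, where $S+T=\{s+t:s\in S,t\in T\}$ and $S+\emptyset=\emptyset$. A multiset $g\in\mathcal{M}^b$ is a divisor of $f$ if $f=g+h$ for some $h\in\mathcal{M}^b$; for $f$ not identically $0$, $d(f)$ is the number of divisors of $f$. $[k]_b\in\mathcal{M}^b$ is the multiset with set-array representation $([k],\emptyset,\ldots,\emptyset)$. Base-$b$ lunar product: for $x=\sum_ix_ib^i$, $y=\sum_jy_jb^j$ with digits in $\{0,\ldots,b-1\}$, $x\otimes y=\sum_n(\max_{i+j=n}\min(x_i,y_j))b^n$;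 $d_b(n)$ is the number of positive integers $m$ with $m\otimes q=n$ for some integer $q$. *)

From mathcomp Require Import all_boot.
Set Implicit Arguments. Unset Strict Implicit. Unset Printing Implicit Defensive.

(* A multiset f in M^b is represented canonically by the sequence of its
   multiplicities [f 0; f 1; ...; f N] with no trailing zero (the zero
   multiset is [::]).  Every entry is at most b. *)
Definition mset (b : nat) (s : seq nat) : bool :=
  all (fun x => x <= b) s && (last 1 s != 0).

Definition mult (s : seq nat) (a : nat) : nat := nth 0 s a.

Definition level (s : seq nat) (i : nat) : nat -> Prop := fun a => i <= mult s a.

Definition sumset (S T : nat -> Prop) : nat -> Prop :=
  fun c => exists x y, x + y = c /\ S x /\ T y.

(* f = g + h : the set arrays satisfy A_i(f) = A_i(g) + A_i(h), i = 1..b *)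
Definition msum_eq (b : nat) (f g h : seq nat) : Prop :=
  forall i, 1 <= i <= b -> forall c, level f i c <-> sumset (level g i) (level h i) c.

Definition divisor (b : nat) (g f : seq nat) : Prop :=
  mset b g /\ exists h, mset b h /\ msum_eq b f g h.

Definition ndiv (b : nat) (f : seq nat) (n : nat) : Prop :=
  exists l : seq (seq nat), uniq l /\ size l = n /\
    forall g, g \in l <-> divisor b g f.

(* [k]_b : set array ([k], empty, ..., empty), i.e. multiplicity 1 on 0..k *)
Definition kset (k : nat) : seq nat := nseq k.+1 1.

From Stdlib Require Import ClassicalEpsilon.
From mathcomp Require Import all_boot zify.
Set Implicit Arguments. Unset Strict Implicit. Unset Printing Implicit Defensive.

(* Each divisor g of f is sent injectively to a divisor of [k]_b.  Let m, a
   be the least elements of f and g and t the width of g; then m = a + (least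
   element of the cofactor), so a <= m.  The image of g has length t + m + 1:
   at x <= t it copies g(a + x) when m + x lies in f and is 2 otherwise, and at
   t + j (0 < j <= m) it is 1 if j = a and 2 otherwise.  A hole x of the image
   has m + x = p + q with p in g and q in the cofactor, so the image is occupied
   at p - a, within distance k - t - m below x: the image shifted by
   [0, k - t - m] covers [0, k], i.e. it divides [k]_b.  The image determines
   t, then a, then g, because a + x in g forces m + x in f.  It misses [0]_b
   when m > 0 (images have at least two entries), and misses [k]_b when m = 0
   unless f = [k]_b. *)

Lemma mult_oversize s a : size s <= a -> mult s a = 0.
Proof. exact: nth_default. Qed.

Lemma mult_gt0_size s a : 0 < mult s a -> a < size s.
Proof. by case: (ltnP a (size s)) => // /mult_oversize ->. Qed.

Lemma mset_mult_le b s a : mset b s -> mult s a <= b.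
Proof.
case/andP => /allP s_le _; case: (ltnP a (size s)) => [a_lt | /mult_oversize -> //].
exact/s_le/mem_nth.
Qed.

Lemma mset_last_gt0 b s : mset b s -> s != [::] -> 0 < mult s (size s).-1.
Proof. by case/andP => _; case: s => // x s; rewrite /mult nth_last lt0n. Qed.

Lemma mset_eq b s t : mset b s -> mset b t -> mult s =1 mult t -> s = t.
Proof.
have size_le u v : mset b v -> mult u =1 mult v -> size v <= size u.
  move=> v_mset uv; rewrite leqNgt; apply/negP => lt_uv.
  have v_neq0 : v != [::] by case: v lt_uv {v_mset uv}.
  by have := mset_last_gt0 v_mset v_neq0; rewrite -uv mult_oversize //; lia.
move=> s_mset t_mset st; apply: (eq_from_nth (x0 := 0)) => [|i _]; last exact: st.
by apply/eqP; rewrite eqn_leq !size_le.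
Qed.

Definition supp_min (s : seq nat) : nat := find (leq 1) s.
Definition supp_max (s : seq nat) : nat := (size s).-1.
Definition supp_width (s : seq nat) : nat := supp_max s - supp_min s.

Lemma supp_min_le s a : 0 < mult s a -> supp_min s <= a.
Proof. by apply: contraTT; rewrite -ltnNge => /(before_find 0) ->. Qed.

Lemma mult_supp_min_gt0 s a : 0 < mult s a -> 0 < mult s (supp_min s).
Proof.
move=> sa; apply: (nth_find 0); apply/hasP; exists (mult s a) => //.
exact/mem_nth/mult_gt0_size.
Qed.

Lemma le_supp_max s a : 0 < mult s a -> a <= supp_max s.
Proof. by move/mult_gt0_size; rewrite /supp_max; lia. Qed.

Lemma mult_gt0_supp s a : 0 < mult s a -> supp_min s <= a <= supp_max s.
Proof. by move=> sa; rewrite supp_min_le ?le_supp_max. Qed.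

Lemma mset_supp_max_gt0 b s a : mset b s -> 0 < mult s a -> 0 < mult s (supp_max s).
Proof.
move=> s_mset sa; apply: (mset_last_gt0 s_mset).
by case: s sa {s_mset} => //; rewrite /mult nth_nil.
Qed.

Lemma mult_kset k a : mult (kset k) a = (a <= k).
Proof. by rewrite /mult nth_nseq ltnS; case: leqP. Qed.

Lemma mset_kset b k : 0 < b -> mset b (kset k).
Proof.
move=> b_gt0; rewrite /mset all_nseq b_gt0 orbT /=.
by elim: k => // -[].
Qed.

Lemma msum_supp b f g h : 0 < b -> msum_eq b f g h -> forall c,
  0 < mult f c <-> exists x y, x + y = c /\ 0 < mult g x /\ 0 < mult h y.
Proof. by move=> b_gt0 fgh; apply: fgh; rewrite leqnn b_gt0. Qed.

(* The cofactor is [k + 1 - size w]_b: levels above 1 are empty on both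
   sides, and level 1 asks that [0, k] be covered by the support of w
   shifted by [0, k + 1 - size w]. *)
Lemma divisor_kset b k w : 0 < b -> mset b w ->
  (forall z, z <= k -> exists x, [/\ x <= z, 0 < mult w x & z - x + size w <= k.+1]) ->
  divisor b w (kset k).
Proof.
move=> b_gt0 w_mset w_cover; split => //.
have [x0 [_ _ size_w]] := w_cover 0 (leq0n _).
exists (kset (k.+1 - size w)); split; first exact: mset_kset.
move=> i /andP[i_gt0 _] c; rewrite /level /sumset !mult_kset.
have [i_gt1 | i_le1] := ltnP 1 i.
  by split=> [|[x [y [_ [_]]]]]; rewrite ?mult_kset; case: leqP; lia.
have -> : i = 1 by lia.
split=> [c_le | [x [y [<- [wx]]]]]; last first.
  by have := mult_gt0_size wx; rewrite mult_kset; case: leqP; lia.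
have [x [x_le wx cover]] : exists x, [/\ x <= c, 0 < mult w x & c - x + size w <= k.+1].
  by apply: w_cover; move: c_le; case: leqP; lia.
by exists x, (c - x); rewrite mult_kset; split; [lia | split => //; case: leqP; lia].
Qed.

Lemma divisor_size b f g : 0 < b -> (exists a, 0 < mult f a) ->
  divisor b g f -> size g <= size f.
Proof.
move=> b_gt0 [c fc] [g_mset [h [_ fgh]]].
have supp_fE := msum_supp b_gt0 fgh.
have [x [y [_ [gx hy]]]] := (supp_fE c).1 fc.
have : 0 < mult f (supp_max g + y).
  by apply/supp_fE; exists (supp_max g), y; rewrite (mset_supp_max_gt0 g_mset gx).
by move/mult_gt0_size; have := mult_gt0_size gx; rewrite /supp_max; lia.
Qed.

Fixpoint bounded_seqs (b n : nat) : seq (seq nat) :=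
  if n is n'.+1 then [seq x :: s | x <- iota 0 b.+1, s <- bounded_seqs b n']
  else [:: [::]].

Lemma mem_bounded_seqs b s : all (leq^~ b) s -> s \in bounded_seqs b (size s).
Proof.
elim: s => // x s IHs /andP[x_le s_le].
by apply/allpairsP; exists (x, s); rewrite mem_iota IHs.
Qed.

Lemma enum_mset_pred b N (P : seq nat -> Prop) :
  (forall s, P s -> mset b s /\ size s <= N) ->
  exists l, uniq l /\ forall s, s \in l <-> P s.
Proof.
move=> P_bounded.
exists (undup [seq s <- flatten [seq bounded_seqs b n | n <- iota 0 N.+1]
             | excluded_middle_informative (P s)]).
split=> [|s]; first exact: undup_uniq.
rewrite mem_undup mem_filter; split=> [/andP[] | Ps].
  by case: excluded_middle_informative.
apply/andP; split; first by case: excluded_middle_informative.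
have [/andP[s_le _] size_s] := P_bounded s Ps.
by apply/flatten_mapP; exists (size s); rewrite ?mem_iota ?mem_bounded_seqs.
Qed.

Lemma divisors_enum b f : 0 < b -> (exists a, 0 < mult f a) ->
  exists l, uniq l /\ forall g, g \in l <-> divisor b g f.
Proof.
move=> b_gt0 f_neq0; apply: (@enum_mset_pred b (size f)) => g g_div.
by split; [case: g_div | exact: divisor_size g_div].
Qed.

Lemma mset_mkseq b (F : nat -> nat) n :
  (forall x, x <= n -> F x <= b) -> 0 < F n -> mset b (mkseq F n.+1).
Proof.
move=> F_le Fn; rewrite /mset {2}mkseqS last_rcons -lt0n Fn andbT.
by apply/allP => y /mapP[x]; rewrite mem_iota => x_lt ->; apply: F_le.
Qed.

Definition lift_mult (f g : seq nat) (x : nat) : nat :=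
  if x <= supp_width g then
    if 0 < mult f (x + supp_min f) then mult g (x + supp_min g) else 2
  else if x - supp_width g == supp_min g then 1 else 2.

Definition lift_div (f g : seq nat) : seq nat :=
  mkseq (lift_mult f g) (supp_width g + supp_min f).+1.

Lemma size_lift_div f g : size (lift_div f g) = (supp_width g + supp_min f).+1.
Proof. exact: size_mkseq. Qed.

Lemma mult_lift_div f g x : x <= supp_width g + supp_min f ->
  mult (lift_div f g) x = lift_mult f g x.
Proof. by move=> x_le; rewrite /mult nth_mkseq. Qed.

Lemma mult_lift_div_low f g x : x <= supp_width g ->
  mult (lift_div f g) x = if 0 < mult f (x + supp_min f) then mult g (x + supp_min g) else 2.
Proof. by move=> x_le; rewrite mult_lift_div ?/lift_mult ?x_le //; lia. Qed.

Lemma mult_lift_div_high f g j : 0 < j <= supp_min f ->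
  mult (lift_div f g) (supp_width g + j) = if j == supp_min g then 1 else 2.
Proof.
move=> j_bd; rewrite mult_lift_div /lift_mult; last by lia.
by rewrite addKn ifN //; lia.
Qed.

Lemma mult_lift_div_gt0 f g x : x <= supp_width g + supp_min f ->
  (x <= supp_width g -> 0 < mult f (x + supp_min f) -> 0 < mult g (x + supp_min g)) ->
  0 < mult (lift_div f g) x.
Proof.
move=> x_le g_gt0; rewrite mult_lift_div // /lift_mult.
by case: ifP => [x_le' | _]; [case: ifPn => // /(g_gt0 x_le') | case: ifP].
Qed.

Section Divisor.

Variables (b k : nat) (f g h : seq nat).
Hypotheses (b_gt0 : 0 < b) (g_mset : mset b g) (fgh : msum_eq b f g h).
Hypotheses (f_le_k : forall a, k < a -> mult f a = 0) (f_neq0 : exists a, 0 < mult f a).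

Let supp_fE := msum_supp b_gt0 fgh.

Lemma msum_supp_min_gt0 : 0 < mult g (supp_min g) /\ 0 < mult h (supp_min h).
Proof.
have [c fc] := f_neq0; have [x [y [_ [gx hy]]]] := (supp_fE c).1 fc.
by rewrite (mult_supp_min_gt0 gx) (mult_supp_min_gt0 hy).
Qed.

Lemma supp_min_msum : supp_min f = supp_min g + supp_min h.
Proof.
have [gmin hmin] := msum_supp_min_gt0; apply/eqP; rewrite eqn_leq.
rewrite supp_min_le; last by apply/supp_fE; exists (supp_min g), (supp_min h).
have [c fc] := f_neq0; have [x [y [<- [gx hy]]]] := (supp_fE _).1 (mult_supp_min_gt0 fc).
by rewrite leq_add ?supp_min_le.
Qed.

Lemma divisor_supp_max_gt0 : 0 < mult g (supp_max g).
Proof. exact: mset_supp_max_gt0 g_mset msum_supp_min_gt0.1. Qed.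

Lemma divisor_supp_min_le_max : supp_min g <= supp_max g.
Proof. by case/andP: (mult_gt0_supp msum_supp_min_gt0.1). Qed.

Lemma msum_supp_le p q : 0 < mult g p -> 0 < mult h q -> p + q <= k.
Proof.
move=> gp hq; rewrite leqNgt; apply/negP => /f_le_k f0.
have : 0 < mult f (p + q) by apply/supp_fE; exists p, q.
by rewrite f0.
Qed.

Lemma mult_divisor_shift x : 0 < mult g (x + supp_min g) -> 0 < mult f (x + supp_min f).
Proof.
move=> gx; apply/supp_fE; exists (x + supp_min g), (supp_min h).
by rewrite supp_min_msum addnA gx msum_supp_min_gt0.2.
Qed.

Lemma lift_div_divisor : 2 <= b -> divisor b (lift_div f g) (kset k).
Proof.
move=> b_ge2; have hmin_gt0 := msum_supp_min_gt0.2.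
have width_le := msum_supp_le divisor_supp_max_gt0 hmin_gt0.
have gmin_le := divisor_supp_min_le_max; have fmin := supp_min_msum.
have top_gt0 : 0 < mult (lift_div f g) (supp_width g + supp_min f).
  apply: mult_lift_div_gt0 => // top_le _; rewrite /supp_width in top_le *.
  have -> : supp_max g - supp_min g + supp_min f + supp_min g = supp_max g by lia.
  exact: divisor_supp_max_gt0.
apply: divisor_kset => //.
  apply: mset_mkseq; last by rewrite -mult_lift_div.
  move=> x _; rewrite /lift_mult.
  by case: ifP => _; [case: ifP => _; rewrite ?(mset_mult_le _ g_mset) | case: ifP]; lia.
move=> z z_le; rewrite size_lift_div.
have [top_le | z_lt] := leqP (supp_width g + supp_min f) z.
  by exists (supp_width g + supp_min f); split => //; rewrite /supp_width in top_le *; lia.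
case: (boolP ((z <= supp_width g) && (0 < mult f (z + supp_min f)))) =>
  [/andP[z_le' fz] | no_hole].
  have [p [q [pq [gp hq]]]] := (supp_fE _).1 fz.
  have := mult_gt0_supp gp; have := supp_min_le hq.
  have := msum_supp_le divisor_supp_max_gt0 hq; rewrite /supp_width in z_le' *.
  move=> pq_le hmin_le /andP[gmin_p p_le].
  exists (p - supp_min g); split; [lia | | lia].
  by apply: mult_lift_div_gt0 => [|_ _]; rewrite /supp_width ?subnK //; lia.
exists z; split => //; last by rewrite /supp_width in z_lt *; lia.
apply: mult_lift_div_gt0 => [|z_le' fz]; first exact: ltnW.
by rewrite z_le' fz in no_hole.
Qed.

Lemma mult_divisor_lift y : mult g y =
  if (supp_min g <= y <= supp_max g) && (0 < mult f (y - supp_min g + supp_min f))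
  then mult (lift_div f g) (y - supp_min g) else 0.
Proof.
have [/andP[gmin_le le_gmax] | y_out] /= := boolP (supp_min g <= y <= supp_max g); last first.
  by apply/eqP; rewrite eqn0Ngt; apply: contra y_out => /mult_gt0_supp.
rewrite mult_lift_div_low /supp_width ?leq_sub2r // subnK //=.
case: (boolP (0 < mult f _)) => // f0; apply/eqP; rewrite eqn0Ngt; apply: contra f0 => gy.
by apply: mult_divisor_shift; rewrite subnK.
Qed.

Lemma lift_div_eq_kset : 2 <= b -> mset b f -> supp_min f = 0 ->
  lift_div f g = kset k -> f = kset k.
Proof.
move=> b_ge2 f_mset fmin0 lift_eq.
have gmin0 : supp_min g = 0 by have := supp_min_msum; lia.
have gmax_k : supp_max g = k.
  have := congr1 size lift_eq; rewrite size_lift_div size_nseq /supp_width gmin0 fmin0; lia.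
have le_k x : x <= k -> 0 < mult f x /\ mult g x = 1.
  move=> x_le; have := congr1 (mult^~ x) lift_eq.
  rewrite mult_kset x_le mult_lift_div_low; last by rewrite /supp_width gmin0 gmax_k subn0.
  by rewrite fmin0 gmin0 !addn0; case: ifP => // _ ->.
have g_le1 x : mult g x <= 1.
  have [/le_k[_ ->] // | k_lt] := leqP x k.
  by rewrite leqNgt; apply: contraL k_lt => /ltnW/le_supp_max; rewrite gmax_k -leqNgt.
apply: (mset_eq f_mset (mset_kset k b_gt0)) => x; rewrite mult_kset.
have [x_le | k_lt] := leqP x k; last exact: f_le_k.
have /(fgh (i := 2)) level2 : 0 < 2 <= b by [].
have f_le1 : mult f x <= 1.
  rewrite leqNgt; apply/negP => /level2[p [q [_ [gp _]]]].
  by have := g_le1 p; rewrite /level in gp; lia.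
by have := (le_k x x_le).1; lia.
Qed.

End Divisor.

Lemma kset_divisor b j k : 0 < b -> j <= k -> divisor b (kset j) (kset k).
Proof.
move=> b_gt0 j_le; apply: divisor_kset; rewrite ?mset_kset // => z z_le.
exists (minn z j); rewrite mult_kset size_nseq geq_minr; split=> //; lia.
Qed.

Lemma lift_div_inj b f g1 g2 : 0 < b -> (exists a, 0 < mult f a) ->
  divisor b g1 f -> divisor b g2 f -> lift_div f g1 = lift_div f g2 -> g1 = g2.
Proof.
move=> b_gt0 f_neq0 [g1_mset [h1 [_ fgh1]]] [g2_mset [h2 [_ fgh2]]] lift_eq.
have width_eq : supp_width g1 = supp_width g2.
  by have := congr1 size lift_eq; rewrite !size_lift_div; lia.
have high_eq j : 0 < j <= supp_min f -> (j == supp_min g1) = (j == supp_min g2).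
  move=> j_bd; have := congr1 (mult^~ (supp_width g1 + j)) lift_eq.
  by rewrite /= {2}width_eq !mult_lift_div_high //; do 2 case: eqP.
have fmin1 := supp_min_msum b_gt0 fgh1 f_neq0.
have fmin2 := supp_min_msum b_gt0 fgh2 f_neq0.
have gmin_eq : supp_min g1 = supp_min g2.
  have [g1min0 | g1min_gt0] := posnP (supp_min g1); last first.
    by apply/eqP; rewrite -high_eq ?eqxx ?g1min_gt0 //=; lia.
  have [-> // | g2min_gt0] := posnP (supp_min g2).
  by apply/esym/eqP; rewrite high_eq ?eqxx ?g2min_gt0 //=; lia.
have gmax_eq : supp_max g1 = supp_max g2.
  move: width_eq (divisor_supp_min_le_max b_gt0 fgh1 f_neq0).
  by have := divisor_supp_min_le_max b_gt0 fgh2 f_neq0; rewrite /supp_width; lia.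
apply: (mset_eq g1_mset g2_mset) => y.
rewrite (mult_divisor_lift b_gt0 fgh1) // (mult_divisor_lift b_gt0 fgh2) //.
by rewrite gmin_eq gmax_eq lift_eq.
Qed.

Lemma lift_div_not_onto b k f : 2 <= b -> mset b f ->
  (forall a, k < a -> mult f a = 0) -> (exists a, 0 < mult f a) -> f <> kset k ->
  exists w, divisor b w (kset k) /\ forall g, divisor b g f -> lift_div f g <> w.
Proof.
move=> b_ge2 f_mset f_le_k f_neq0 f_neq; have b_gt0 := ltnW b_ge2.
have [fmin0 | fmin_gt0] := posnP (supp_min f).
  exists (kset k); split=> [|g [g_mset [h [_ fgh]]]]; first exact: kset_divisor.
  by move/(lift_div_eq_kset b_gt0 g_mset fgh f_le_k f_neq0 b_ge2 f_mset fmin0).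
exists (kset 0); split=> [|g _ /(congr1 size)]; first exact: kset_divisor.
by rewrite size_lift_div size_nseq; lia.
Qed.

Lemma leq_size_inj (T U : eqType) (F : T -> U) (s : seq T) (t : seq U) :
  uniq s -> {in s &, injective F} -> {subset map F s <= t} -> size s <= size t.
Proof.
by move=> s_uniq F_inj sub; rewrite -(size_map F) uniq_leq_size ?map_inj_in_uniq.
Qed.

Lemma ltn_size_inj (T U : eqType) (F : T -> U) (s : seq T) (t : seq U) w :
  uniq s -> {in s &, injective F} -> {subset map F s <= t} ->
  w \in t -> w \notin map F s -> size s < size t.
Proof.
move=> s_uniq F_inj sub wt w_notin; rewrite -(size_map F) -[_.+1]/(size (w :: _)).
apply: uniq_leq_size => [|x]; first by rewrite /= w_notin map_inj_in_uniq.
by rewrite inE => /predU1P[-> | /sub].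
Qed.

Theorem mainTheorem3 (b k : nat) (f : seq nat) :
  2 <= b -> mset b f ->
  (forall a, k < a -> mult f a = 0) ->
  (exists a, mult f a != 0) ->
  exists n m, ndiv b f n /\ ndiv b (kset k) m /\ n <= m /\
    (f <> kset k -> n < m).
Proof.
move=> b_ge2 f_mset f_le_k [a fa]; have b_gt0 := ltnW b_ge2.
have f_neq0 : exists a, 0 < mult f a by exists a; rewrite lt0n.
have [lf [lf_uniq lfP]] := divisors_enum b_gt0 f_neq0.
have [lk [lk_uniq lkP]] : exists l, uniq l /\ forall g, g \in l <-> divisor b g (kset k).
  by apply: divisors_enum => //; exists 0; rewrite mult_kset.
have lift_sub : {subset map (lift_div f) lf <= lk}.
  move=> _ /mapP[g /lfP [g_mset [h [_ fgh]]] ->]; apply/lkP.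
  exact: lift_div_divisor b_gt0 g_mset fgh f_le_k f_neq0 b_ge2.
have lift_inj : {in lf &, injective (lift_div f)}.
  by move=> g1 g2 /lfP g1_div /lfP g2_div; apply: lift_div_inj b_gt0 f_neq0 g1_div g2_div.
exists (size lf), (size lk); do !split; [by exists lf | by exists lk | |].
  exact: leq_size_inj lift_inj lift_sub.
move=> f_neq.
have [w [/lkP w_div w_new]] := lift_div_not_onto b_ge2 f_mset f_le_k f_neq0 f_neq.
apply: (ltn_size_inj lf_uniq lift_inj lift_sub w_div).
by apply/mapP => -[g /lfP g_div /esym/w_new].
Qed.
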